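(* Let $0<q<1$, $N\in\{\tfrac12,1,\tfrac32,2,\dots\}$, $n\in\{0,1,\dots,\lfloor N+\tfrac12\rfloor\}$, and $\alpha\in\mathbb{C}$ with $\pm q\alpha, q^2\alpha^2\notin\{q^{-j}:j\in\mathbb{Z}_{\ge0}\}$. Then for all $x\in\mathbb{C}$: $${}_4\phi_3\!\left(\begin{matrix}q^{-2n},\alpha^2q^{2n+1},q^{-x-N-\frac12},-q^{x-N-\frac12}\\ q\alpha,-q\alpha,q^{-2N-1}\end{matrix};q,q\right)={}_4\phi_3\!\left(\begin{matrix}q^{-2n},\alpha^2q^{2n+1},q^{-2x-2N-1},q^{2x-2N-1}\\ q^2\alpha^2,q^{-2N-1},q^{-2N}\end{matrix};q^2,q^2\right).$$ (Equivalently, in terms of $q$-Racah polynomials, $R_{2n}(q^{-x-N-\frac12}-q^{x-N-\frac12};\alpha,\alpha,q^{-2N-2},-1\,|\,q)=R_n(q^{-2x-2N-1}+q^{2x-2N-1};\alpha^2,q^{-1},q^{-2N-2},q^{-2N-2}\,|\,q^2)$.)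
   Context: $(x;q)_k=\prod_{j=0}^{k-1}(1-xq^j)$. ${}_4\phi_3\!\left(\begin{matrix}a_1,a_2,a_3,a_4\\ b_1,b_2,b_3\end{matrix};q,z\right)=\sum_{k\ge0}\frac{(a_1,a_2,a_3,a_4;q)_k}{(b_1,b_2,b_3,q;q)_k}z^k$; here the series terminate because of the numerator parameter $q^{-2n}$ (resp. $(q^2)^{-n}$ in base $q^2$). $q$-Racah polynomials: $R_n(q^{-y}+\gamma\delta q^{y+1};\alpha,\beta,\gamma,\delta\,|\,q)={}_4\phi_3(q^{-n},\alpha\beta q^{n+1},q^{-y},\gamma\delta q^{y+1};\alpha q,\beta\delta q,\gamma q;q,q)$. *)

From HB Require Import structures.
From mathcomp Require Import all_boot all_order all_algebra.
Set Implicit Arguments. Unset Strict Implicit. Unset Printing Implicit Defensive.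
Import Order.TTheory GRing.Theory Num.Theory.
Local Open Scope ring_scope.

Definition qpoch (R : ringType) (x q : R) (k : nat) : R :=
  \prod_(j < k) (1 - x * q ^+ j).

(* It is used only with a
   numerator parameter a1 = base^(-K), for which all terms with k > K vanish,
   so this is exactly the (terminating) basic hypergeometric series. *)
Definition phi43 (R : fieldType) (K : nat) (a1 a2 a3 a4 b1 b2 b3 base z : R) : R :=
  \sum_(k < K.+1)
    (qpoch a1 base k * qpoch a2 base k * qpoch a3 base k * qpoch a4 base k)
    / (qpoch b1 base k * qpoch b2 base k * qpoch b3 base k * qpoch base base k)
    * z ^+ k.

From HB Require Import structures.
From mathcomp Require Import all_boot all_order all_algebra.
From mathcomp Require Import ring.
Import Order.TTheory GRing.Theory Num.Theory.
Set Implicit Arguments. Unset Strict Implicit. Unset Printing Implicit Defensive.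
Local Open Scope ring_scope.

(* Write s = q^(-N-1/2).  Both sides, as functions of z = q^x, are eigenfunctions with the
   same eigenvalue of one second-order q-difference operator L (shifts z -> z/q, z -> q z),
   which acts bidiagonally on phi_j(z) = (s/z;q)_j (-s z;q)_j and on
   psi_k(z) = (s^2/z^2;q^2)_k (s^2 z^2;q^2)_k: the left side is a combination of phi_0..phi_2n,
   the right side of psi_0..psi_n.  Since (x^2;q^2)_k = (x;q)_k (-x;q)_k, psi_k is phi_k times
   k factors (1 + s q^i/z)(1 - s z q^i), each raising the phi-degree by one, so the difference
   of the two sides is a combination sum_j c_j phi_j.  Evaluating at z = s gives c_0 = 0, and
   the eigenvalue equation, read off at the points z = s q^m where the phi_j are triangular,
   gives c_(j+1) mu_(j+1) = (lambda_2n - lambda_j) c_j with mu_(j+1) <> 0; so every c_j is 0. *)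

Section QPochhammer.
Variable R : fieldType.
Implicit Types (x p : R) (k : nat).

Lemma qpoch0 x p : qpoch x p 0 = 1.
Proof. by rewrite /qpoch big_ord0. Qed.

Lemma qpochS x p k : qpoch x p k.+1 = qpoch x p k * (1 - x * p ^+ k).
Proof. by rewrite /qpoch big_ord_recr. Qed.

Lemma qpochSl x p k : qpoch x p k.+1 = (1 - x) * qpoch (x * p) p k.
Proof.
rewrite /qpoch big_ord_recl /= expr0 mulr1; congr (_ * _).
by apply: eq_bigr => i _; rewrite /bump /= add1n exprS mulrA.
Qed.

Lemma qpochSS x p k :
  qpoch x p k.+2 = (1 - x) * qpoch (x * p) p k * (1 - x * p * p ^+ k).
Proof. by rewrite qpochSl qpochS mulrA. Qed.

Lemma qpochSS_mul x p k :
  qpoch (x * p) p k.+2 =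
  qpoch (x * p) p k * (1 - x * p * p ^+ k) * (1 - x * p * (p ^+ k * p)).
Proof. by rewrite !qpochS exprSr. Qed.

Lemma qpochSS_div x p k : p != 0 ->
  qpoch (x / p) p k.+2 = (1 - x / p) * ((1 - x) * qpoch (x * p) p k).
Proof. by move=> p0; rewrite qpochSl divfK // qpochSl. Qed.

Lemma qpoch_neq0 x p k :
  (forall i, (i < k)%N -> 1 - x * p ^+ i != 0) -> qpoch x p k != 0.
Proof. by move=> h; apply/prodf_neq0 => i _; apply: h. Qed.

Lemma qpoch_eq0 x p i k : (i < k)%N -> x * p ^+ i = 1 -> qpoch x p k = 0.
Proof. by move=> lt_ik e; rewrite /qpoch (bigD1 (Ordinal lt_ik)) //= e subrr mul0r. Qed.

Lemma qfactor_neq0 x p i : p != 0 -> x != p ^- i -> 1 - x * p ^+ i != 0.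
Proof.
move=> p0; apply: contra; rewrite subr_eq0 eq_sym => /eqP e.
by rewrite -[x](mulfK (expf_neq0 i p0)) e mul1r.
Qed.

End QPochhammer.

Lemma qpoch_self_neq0 (R : numFieldType) (p : R) k : 0 < p -> p < 1 -> qpoch p p k != 0.
Proof.
move=> p_gt0 p_lt1; apply: qpoch_neq0 => i _.
by rewrite subr_eq0 eq_sym -exprS lt_eqF // exprn_ilt1 ?ltW.
Qed.

Lemma tridiag_sum_shift (R : comPzRingType) (D : nat) (c lam mu b : nat -> R) :
  mu 0%N = 0 ->
  \sum_(j < D.+1) c j * (lam j * b j + mu j * b j.-1) - lam D * \sum_(j < D.+1) c j * b j
  = \sum_(j < D) (c j * (lam j - lam D) + c j.+1 * mu j.+1) * b j.
Proof.
move=> mu0.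
have -> : \sum_(j < D) (c j * (lam j - lam D) + c j.+1 * mu j.+1) * b j =
    \sum_(j < D) c j * lam j * b j + \sum_(j < D) c j.+1 * mu j.+1 * b j
    - lam D * \sum_(j < D) c j * b j.
  by rewrite mulr_sumr -big_split -sumrB; apply: eq_bigr => j _ /=; ring.
rewrite (eq_bigr (fun j : 'I_D.+1 => c j * lam j * b j + c j * mu j * b j.-1)) => [|j _].
  rewrite big_split /= [X in X + _ - _]big_ord_recr [X in _ + X - _]big_ord_recl /=.
  rewrite mu0 mulr0 mul0r add0r.
  by rewrite [X in _ - _ * X]big_ord_recr /=; ring.
by ring.
Qed.

Section QDifferenceOperator.
Variables (R : fieldType) (q s a : R).

Definition phi_basis (j : nat) (z : R) : R :=
  qpoch (z^-1 * s) q j * qpoch (- (z * s)) q j.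

Definition psi_basis (k : nat) (z : R) : R :=
  qpoch (z ^- 2 * s ^+ 2) (q ^+ 2) k * qpoch (z ^+ 2 * s ^+ 2) (q ^+ 2) k.

Definition qdiffop (F : R -> R) (z : R) : R :=
  (z ^+ 2 - s ^+ 2) * (s ^+ 2 * z ^+ 2 - q ^+ 2 * a ^+ 2)
    / (s ^+ 2 * (z ^+ 2 + 1) * (z ^+ 2 + q)) * (F (z / q) - F z)
  + (1 - s ^+ 2 * z ^+ 2) * (s ^+ 2 - q ^+ 2 * a ^+ 2 * z ^+ 2)
    / (s ^+ 2 * (1 + z ^+ 2) * (1 + q * z ^+ 2)) * (F (q * z) - F z).

Definition eigval (j : nat) : R := ((q ^+ j)^-1 - 1) * (1 - a ^+ 2 * q * q ^+ j).

Definition phi_lowcoef (j : nat) : R :=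
  - (q ^+ j)^-1 * (1 - q ^+ j) * (1 - a * q ^+ j) * (1 + a * q ^+ j)
    * (1 - s ^+ 2 * q ^+ j / q).

Definition psi_lowcoef (k : nat) : R :=
  - ((q ^+ 2) ^+ k)^-1 * (1 - (q ^+ 2) ^+ k) * (1 - a ^+ 2 * (q ^+ 2) ^+ k)
    * (1 - s ^+ 2 * (q ^+ 2) ^+ k / q ^+ 2) * (1 - s ^+ 2 * (q ^+ 2) ^+ k / q).

Lemma phi_lowcoef0 : phi_lowcoef 0 = 0.
Proof. by rewrite /phi_lowcoef expr0 subrr mulr0 !mul0r. Qed.

Lemma psi_lowcoef0 : psi_lowcoef 0 = 0.
Proof. by rewrite /psi_lowcoef expr0 subrr mulr0 !mul0r. Qed.

Lemma qdiffop_ext (F G : R -> R) z :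
  F (z / q) = G (z / q) -> F z = G z -> F (q * z) = G (q * z) ->
  qdiffop F z = qdiffop G z.
Proof. by rewrite /qdiffop => -> -> ->. Qed.

Lemma qdiffop_sum (D : nat) (c : nat -> R) (b : nat -> R -> R) z :
  qdiffop (fun x => \sum_(j < D.+1) c j * b j x) z = \sum_(j < D.+1) c j * qdiffop (b j) z.
Proof.
rewrite /qdiffop -!sumrB !mulr_sumr -big_split /=.
by apply: eq_bigr => i _; ring.
Qed.

Lemma qdiffop_tridiag_eigen (D : nat) (c lam mu : nat -> R) (b : nat -> R -> R) z :
  mu 0%N = 0 ->
  (forall j, (j <= D)%N -> qdiffop (b j) z = lam j * b j z + mu j * b j.-1 z) ->
  (forall j, (j < D)%N -> c j.+1 * mu j.+1 = (lam D - lam j) * c j) ->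
  qdiffop (fun x => \sum_(j < D.+1) c j * b j x) z = lam D * \sum_(j < D.+1) c j * b j z.
Proof.
move=> mu0 hb hc; apply/eqP; rewrite -subr_eq0 qdiffop_sum.
rewrite (eq_bigr (fun j : 'I_D.+1 => c j * (lam j * b j z + mu j * b j.-1 z))); last first.
  by move=> j _; rewrite hb // -ltnS.
rewrite (@tridiag_sum_shift _ D c lam mu (fun j => b j z)) //.
by rewrite big1 // => j _; rewrite hc //; ring.
Qed.

Lemma qdiffop_sub (F G : R -> R) z :
  qdiffop (fun x => F x - G x) z = qdiffop F z - qdiffop G z.
Proof. by rewrite /qdiffop; ring. Qed.

Hypotheses (q0 : q != 0) (s0 : s != 0).

Section Point.
Variable z : R.
Hypotheses (z0 : z != 0) (z2D1 : z ^+ 2 + 1 != 0) (z2Dq : z ^+ 2 + q != 0)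
  (qz2D1 : 1 + q * z ^+ 2 != 0).

Let z2D1' : 1 + z ^+ 2 != 0. Proof. by rewrite addrC. Qed.

Lemma qdiffop_phi j :
  qdiffop (phi_basis j) z = eigval j * phi_basis j z + phi_lowcoef j * phi_basis j.-1 z.
Proof.
rewrite /qdiffop /eigval /phi_lowcoef /phi_basis.
case: j => [|[|j]].
- by rewrite !qpoch0 !expr0 !subrr invr1; ring.
- by rewrite !qpochS !qpoch0 !expr0 /=; field; rewrite ?q0 ?z0 ?z2D1 ?z2D1' ?z2Dq ?qz2D1 ?s0.
have -> : (z / q)^-1 * s = z^-1 * s * q by field; rewrite ?q0 ?z0.
have -> : - (z / q * s) = - (z * s) / q by field; rewrite ?q0 ?z0.
have -> : (q * z)^-1 * s = z^-1 * s / q by field; rewrite ?q0 ?z0.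
have -> : - (q * z * s) = - (z * s) * q by field; rewrite ?q0 ?z0.
rewrite /= (qpochSS_mul (z^-1 * s)) (qpochSS_div (z^-1 * s)) // (qpochSS (z^-1 * s)).
rewrite (qpochSl (z^-1 * s)) (qpochSS_mul (- (z * s))) (qpochSS_div (- (z * s))) //.
rewrite (qpochSS (- (z * s))) (qpochSl (- (z * s))) !exprS.
have qj0 : q ^+ j != 0 by rewrite expf_neq0.
by field; rewrite ?q0 ?z0 ?z2D1 ?z2D1' ?z2Dq ?qz2D1 ?s0 ?qj0.
Qed.

Lemma qdiffop_psi k :
  qdiffop (psi_basis k) z =
  eigval k.*2 * psi_basis k z + psi_lowcoef k * psi_basis k.-1 z.
Proof.
have q20 : q ^+ 2 != 0 by rewrite expf_neq0.
rewrite /qdiffop /eigval -mul2n exprM /psi_lowcoef /psi_basis.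
case: k => [|[|k]].
- by rewrite !qpoch0 !expr0 !subrr invr1; ring.
- by rewrite !qpochS !qpoch0 !expr0 /=; field; rewrite ?q0 ?z0 ?z2D1 ?z2D1' ?z2Dq ?qz2D1 ?s0.
have -> : (z / q) ^- 2 * s ^+ 2 = z ^- 2 * s ^+ 2 * q ^+ 2 by field; rewrite ?q0 ?z0.
have -> : (z / q) ^+ 2 * s ^+ 2 = z ^+ 2 * s ^+ 2 / q ^+ 2 by field; rewrite ?q0 ?z0.
have -> : (q * z) ^- 2 * s ^+ 2 = z ^- 2 * s ^+ 2 / q ^+ 2 by field; rewrite ?q0 ?z0.
have -> : (q * z) ^+ 2 * s ^+ 2 = z ^+ 2 * s ^+ 2 * q ^+ 2 by field; rewrite ?q0 ?z0.
rewrite /= (qpochSS_mul (z ^- 2 * s ^+ 2)) (qpochSS_div (z ^- 2 * s ^+ 2)) //.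
rewrite (qpochSS (z ^- 2 * s ^+ 2)) (qpochSl (z ^- 2 * s ^+ 2)).
rewrite (qpochSS_mul (z ^+ 2 * s ^+ 2)) (qpochSS_div (z ^+ 2 * s ^+ 2)) //.
rewrite (qpochSS (z ^+ 2 * s ^+ 2)) (qpochSl (z ^+ 2 * s ^+ 2)) !(exprS (q ^+ 2)).
have qk0 : (q ^+ 2) ^+ k != 0 by rewrite expf_neq0.
by field; rewrite ?q0 ?z0 ?z2D1 ?z2D1' ?z2Dq ?qz2D1 ?s0 ?qk0.
Qed.

End Point.
End QDifferenceOperator.

Section Span.
Variables (R : fieldType) (q s : R).

Definition in_span (D : nat) (F : R -> R) : Prop :=
  exists c : nat -> R, forall x, x != 0 -> F x = \sum_(j < D.+1) c j * phi_basis q s j x.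

Definition phi_cofactor (i : nat) (x : R) : R :=
  (1 + x^-1 * s * q ^+ i) * (1 - x * s * q ^+ i).

Lemma span_ext D (F G : R -> R) :
  in_span D F -> (forall x, x != 0 -> F x = G x) -> in_span D G.
Proof. by move=> [c hc] FG; exists c => x x0; rewrite -FG // hc. Qed.

Lemma span_add D (F G : R -> R) :
  in_span D F -> in_span D G -> in_span D (fun x => F x + G x).
Proof.
move=> [c hc] [d hd]; exists (fun j => c j + d j) => x x0.
by rewrite hc // hd // -big_split; apply: eq_bigr => i _; rewrite mulrDl.
Qed.

Lemma span_scale D (F : R -> R) k : in_span D F -> in_span D (fun x => k * F x).
Proof.
move=> [c hc]; exists (fun j => k * c j) => x x0.
by rewrite hc // mulr_sumr; apply: eq_bigr => i _; rewrite mulrA.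
Qed.

Lemma span_widen D D' (F : R -> R) : (D <= D')%N -> in_span D F -> in_span D' F.
Proof.
move=> le_DD' [c hc]; exists (fun j => if (j < D.+1)%N then c j else 0) => x x0.
rewrite hc // (big_ord_widen D'.+1 (fun j => c j * phi_basis q s j x)) ?ltnS //.
by rewrite big_mkcond; apply: eq_bigr => i _; case: ifP; rewrite ?mul0r.
Qed.

Lemma span_phi k : in_span k (phi_basis q s k).
Proof.
exists (fun j => (j == k)%:R) => x x0.
rewrite big_ord_recr /= big1 => [|i _]; last by rewrite (ltn_eqF (ltn_ord i)) mul0r.
by rewrite eqxx mul1r add0r.
Qed.

Lemma span_sum D K (B : nat -> R) (G : nat -> R -> R) :
  (forall k, (k <= K)%N -> in_span D (G k)) ->
  in_span D (fun x => \sum_(k < K.+1) B k * G k x).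
Proof.
elim: K => [|K IH] hG.
  by apply: (span_ext (span_scale (B 0%N) (hG 0%N (leqnn 0)))) => x _; rewrite big_ord1.
have hG' k : (k <= K)%N -> in_span D (G k).
  by move=> le_kK; apply: hG; rewrite (leq_trans le_kK).
apply: (span_ext (span_add (IH hG') (span_scale (B K.+1) (hG _ (leqnn _))))) => x _.
by rewrite [RHS]big_ord_recr.
Qed.

Hypothesis q0 : q != 0.

Lemma phi_basis_mul_cofactor i j x : x != 0 ->
  phi_basis q s j x * phi_cofactor i x =
  (1 - s ^+ 2 * q ^+ i * q ^+ i + q ^+ i / q ^+ j * (1 - s ^+ 2 * q ^+ j * q ^+ j))
    * phi_basis q s j x
  - q ^+ i / q ^+ j * phi_basis q s j.+1 x.
Proof.
move=> x0; rewrite /phi_basis /phi_cofactor !qpochS.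
have qj0 : q ^+ j != 0 by rewrite expf_neq0.
by field; rewrite ?qj0 ?x0.
Qed.

Lemma span_mul_cofactor D i (F : R -> R) :
  in_span D F -> in_span D.+1 (fun x => F x * phi_cofactor i x).
Proof.
move=> [c hc].
pose be j := 1 - s ^+ 2 * q ^+ i * q ^+ i + q ^+ i / q ^+ j * (1 - s ^+ 2 * q ^+ j * q ^+ j).
pose ga j := - (q ^+ i / q ^+ j).
exists (fun j => (if (j < D.+1)%N then c j * be j else 0) +
                 (if j is j'.+1 then c j' * ga j' else 0)) => x x0.
rewrite hc // mulr_suml.
under eq_bigr do rewrite -mulrA phi_basis_mul_cofactor // mulrDr.
under [RHS]eq_bigr do rewrite mulrDl.
rewrite !big_split /=; congr (_ + _).
  rewrite [RHS]big_ord_recr /= ltnn mul0r addr0.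
  by apply: eq_bigr => j _; rewrite ltn_ord mulrA.
rewrite [RHS]big_ord_recl /= mul0r add0r.
by apply: eq_bigr => j _; rewrite /ga; ring.
Qed.

Lemma psi_basis_prod k x : x != 0 ->
  psi_basis q s k x = phi_basis q s k x * \prod_(i < k) phi_cofactor i x.
Proof.
move=> x0; elim: k => [|k IH].
  by rewrite /psi_basis /phi_basis !qpoch0 big_ord0 !mulr1.
rewrite big_ord_recr /=.
transitivity (psi_basis q s k x *
    ((1 - x ^- 2 * s ^+ 2 * (q ^+ 2) ^+ k) * (1 - x ^+ 2 * s ^+ 2 * (q ^+ 2) ^+ k))).
  by rewrite /psi_basis !qpochS; ring.
by rewrite IH /phi_basis /phi_cofactor !qpochS exprAC; field; rewrite ?x0.
Qed.

Lemma span_psi k : in_span k.*2 (psi_basis q s k).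
Proof.
have span_prod m :
    in_span (k + m) (fun x => phi_basis q s k x * \prod_(i < m) phi_cofactor i x).
  elim: m => [|m IH].
    by rewrite addn0; apply: (span_ext (span_phi k)) => x _; rewrite big_ord0 mulr1.
  rewrite addnS; apply: (span_ext (span_mul_cofactor m IH)) => x _.
  by rewrite big_ord_recr /= mulrA.
by rewrite -addnn; apply: (span_ext (span_prod k)) => x x0; rewrite psi_basis_prod.
Qed.

End Span.

Section PositiveLattice.
Variables (R : numFieldType) (q s : R).
Hypotheses (q_gt0 : 0 < q) (q_lt1 : q < 1) (s_gt0 : 0 < s).

Let q0 : q != 0. Proof. by rewrite gt_eqF. Qed.
Let s0 : s != 0. Proof. by rewrite gt_eqF. Qed.
Let q_neq1 : q != 1. Proof. by rewrite lt_eqF. Qed.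

Let gt0_regular x : 0 < x ->
  [/\ x != 0, x ^+ 2 + 1 != 0, x ^+ 2 + q != 0 & 1 + q * x ^+ 2 != 0].
Proof.
move=> x_gt0; split; rewrite gt_eqF // addr_gt0 ?exprn_gt0 //.
by rewrite mulr_gt0 ?exprn_gt0.
Qed.

Lemma qdiffop_phi_gt0 a x j : 0 < x ->
  qdiffop q s a (phi_basis q s j) x =
  eigval q a j * phi_basis q s j x + phi_lowcoef q s a j * phi_basis q s j.-1 x.
Proof. by case/gt0_regular => *; apply: qdiffop_phi. Qed.

Lemma qdiffop_psi_gt0 a x k : 0 < x ->
  qdiffop q s a (psi_basis q s k) x =
  eigval q a k.*2 * psi_basis q s k x + psi_lowcoef q s a k * psi_basis q s k.-1 x.
Proof. by case/gt0_regular => *; apply: qdiffop_psi. Qed.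

Lemma sum_phi_basis_s D (c : nat -> R) : \sum_(j < D.+1) c j * phi_basis q s j s = c 0%N.
Proof.
rewrite big_ord_recl big1 => [|j _]; first by rewrite /phi_basis !qpoch0 !mulr1 addr0.
by rewrite /phi_basis qpochSl mulVf // subrr !mul0r mulr0.
Qed.

Lemma sum_psi_basis_s n (c : nat -> R) : \sum_(k < n.+1) c k * psi_basis q s k s = c 0%N.
Proof.
rewrite big_ord_recl big1 => [|k _]; first by rewrite /psi_basis !qpoch0 !mulr1 addr0.
by rewrite /psi_basis qpochSl mulVf ?expf_neq0 // subrr !mul0r mulr0.
Qed.

Lemma phi_basis_lattice_eq0 j m : (m < j)%N -> phi_basis q s j (s * q ^+ m) = 0.
Proof.
move=> lt_mj; rewrite /phi_basis [X in X * _](@qpoch_eq0 _ _ _ m) ?mul0r //.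
have qm0 : q ^+ m != 0 by rewrite expf_neq0.
by field; rewrite ?s0 ?qm0.
Qed.

Lemma phi_basis_lattice_neq0 j m : (j <= m)%N -> phi_basis q s j (s * q ^+ m) != 0.
Proof.
move=> le_jm; have qm0 : q ^+ m != 0 by rewrite expf_neq0.
rewrite mulf_neq0 //; apply: qpoch_neq0 => i lt_ij.
  have -> : 1 - (s * q ^+ m)^-1 * s * q ^+ i = (q ^+ m - q ^+ i) / q ^+ m.
    by field; rewrite ?s0 ?qm0.
  rewrite mulf_neq0 ?invr_eq0 // subr_eq0 (inj_eq (ieexprIn q_gt0 q_neq1)).
  by rewrite gtn_eqF // (leq_trans lt_ij).
by rewrite mulNr opprK gt_eqF // addr_gt0 ?mulr_gt0 ?exprn_gt0.
Qed.

Lemma lattice_coef_eq0 D (e : nat -> R) :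
  (forall m, (m < D)%N -> \sum_(j < D) e j * phi_basis q s j (s * q ^+ m) = 0) ->
  forall j, (j < D)%N -> e j = 0.
Proof.
move=> he; elim/ltn_ind => m IH lt_mD.
have := he m lt_mD; rewrite (bigD1 (Ordinal lt_mD)) //= big1 ?addr0 => [/eqP|j ne_jm].
  by rewrite mulf_eq0 (negbTE (phi_basis_lattice_neq0 (leqnn m))) orbF => /eqP.
case: (ltngtP j m) => [lt_jm|lt_mj|eq_jm].
- by rewrite IH // mul0r.
- by rewrite phi_basis_lattice_eq0 // mulr0.
- by move: ne_jm; rewrite -val_eqE /= eq_jm eqxx.
Qed.

Lemma qdiffop_span_eigen_eq0 a D (h : R -> R) :
  (forall j, (0 < j <= D)%N -> phi_lowcoef q s a j != 0) ->
  in_span q s D h -> h s = 0 ->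
  (forall x, 0 < x -> qdiffop q s a h x = eigval q a D * h x) ->
  forall x, x != 0 -> h x = 0.
Proof.
move=> mu_neq0 [c hc] hs_eq0 h_eigen.
pose lam := eigval q a; pose mu := phi_lowcoef q s a.
have c0 : c 0%N = 0 by rewrite -hs_eq0 hc ?sum_phi_basis_s.
have c_rec : forall j, (j < D)%N -> c j * (lam j - lam D) + c j.+1 * mu j.+1 = 0.
  apply: lattice_coef_eq0 => m _; set x := s * q ^+ m.
  have x_gt0 : 0 < x by rewrite mulr_gt0 ?exprn_gt0.
  rewrite -(@tridiag_sum_shift _ D c lam mu (fun j => phi_basis q s j x)).
    under eq_bigr do rewrite -qdiffop_phi_gt0 //.
    rewrite -qdiffop_sum.
    have -> : qdiffop q s a (fun y => \sum_(j < D.+1) c j * phi_basis q s j y) x =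
              qdiffop q s a h x.
      by apply: qdiffop_ext; rewrite hc // gt_eqF // ?divr_gt0 ?mulr_gt0 ?exprn_gt0.
    by rewrite -hc ?gt_eqF // h_eigen ?subrr.
  exact: phi_lowcoef0.
have cD : forall j, (j <= D)%N -> c j = 0.
  elim=> // j IH lt_jD; have /eqP := c_rec j lt_jD.
  rewrite IH ?(ltnW lt_jD) // mul0r add0r mulf_eq0 (negbTE (mu_neq0 j.+1 lt_jD)) orbF.
  by move/eqP.
by move=> x x0; rewrite hc // big1 // => j _; rewrite cD ?mul0r // -ltnS.
Qed.
End PositiveLattice.

Section Coefficients.
Variables (R : fieldType) (q s a : R).

Definition phi_coef (D j : nat) : R :=
  qpoch (q ^- D) q j * qpoch (a ^+ 2 * q ^+ D.+1) q j
  / (qpoch (q * a) q j * qpoch (- (q * a)) q j * qpoch (s ^+ 2) q j * qpoch q q j) * q ^+ j.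

Definition psi_coef (n k : nat) : R :=
  qpoch (q ^+ 2 ^- n) (q ^+ 2) k * qpoch (a ^+ 2 * q ^+ n.*2.+1) (q ^+ 2) k
  / (qpoch (q ^+ 2 * a ^+ 2) (q ^+ 2) k * qpoch (s ^+ 2) (q ^+ 2) k
     * qpoch (s ^+ 2 * q) (q ^+ 2) k * qpoch (q ^+ 2) (q ^+ 2) k) * (q ^+ 2) ^+ k.

Definition phi_series (D : nat) (z : R) : R :=
  \sum_(j < D.+1) phi_coef D j * phi_basis q s j z.

Definition psi_series (n : nat) (z : R) : R :=
  \sum_(k < n.+1) psi_coef n k * psi_basis q s k z.

Lemma phi43_phi_series D z :
  phi43 D (q ^- D) (a ^+ 2 * q ^+ D.+1) (z^-1 * s) (- (z * s))
        (q * a) (- (q * a)) (s ^+ 2) q q =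
  phi_series D z.
Proof. by apply: eq_bigr => j _; rewrite /phi_coef /phi_basis; ring. Qed.

Lemma phi43_psi_series n z :
  phi43 n (q ^+ 2 ^- n) (a ^+ 2 * q ^+ n.*2.+1) (z ^- 2 * s ^+ 2) (z ^+ 2 * s ^+ 2)
        (q ^+ 2 * a ^+ 2) (s ^+ 2) (s ^+ 2 * q) (q ^+ 2) (q ^+ 2) =
  psi_series n z.
Proof. by apply: eq_bigr => k _; rewrite /psi_coef /psi_basis; ring. Qed.

Hypothesis q0 : q != 0.

Lemma phi_coef_rec D j :
  qpoch (q * a) q j.+1 != 0 -> qpoch (- (q * a)) q j.+1 != 0 ->
  qpoch (s ^+ 2) q j.+1 != 0 -> qpoch q q j.+1 != 0 ->
  phi_coef D j.+1 * phi_lowcoef q s a j.+1 = (eigval q a D - eigval q a j) * phi_coef D j.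
Proof.
rewrite !qpochS !mulf_eq0 !negb_or => /andP[d1 e1] /andP[d2 e2] /andP[d3 e3] /andP[d4 e4].
have qj0 : q ^+ j != 0 by rewrite expf_neq0.
have qD0 : q ^+ D != 0 by rewrite expf_neq0.
rewrite /phi_coef /phi_lowcoef /eigval !qpochS [q ^+ j.+1]exprS [q ^+ D.+1]exprS.
move: d1 d2 d3 d4 e1 e2 e3 e4 qj0 qD0; set Q := q ^+ j; set N := q ^+ D.
move=> d1 d2 d3 d4 e1 e2 e3 e4 qj0 qD0.
by field; rewrite ?q0 ?d1 ?d2 ?d3 ?d4 ?e1 ?e2 ?e3 ?e4 ?qj0 ?qD0.
Qed.

Lemma psi_coef_rec n k :
  qpoch (q ^+ 2 * a ^+ 2) (q ^+ 2) k.+1 != 0 -> qpoch (s ^+ 2) (q ^+ 2) k.+1 != 0 ->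
  qpoch (s ^+ 2 * q) (q ^+ 2) k.+1 != 0 -> qpoch (q ^+ 2) (q ^+ 2) k.+1 != 0 ->
  psi_coef n k.+1 * psi_lowcoef q s a k.+1 =
  (eigval q a n.*2 - eigval q a k.*2) * psi_coef n k.
Proof.
rewrite !qpochS !mulf_eq0 !negb_or => /andP[d1 e1] /andP[d2 e2] /andP[d3 e3] /andP[d4 e4].
have q20 : q ^+ 2 != 0 by rewrite expf_neq0.
have qk0 : (q ^+ 2) ^+ k != 0 by rewrite expf_neq0.
have qn0 : (q ^+ 2) ^+ n != 0 by rewrite expf_neq0.
rewrite /psi_coef /psi_lowcoef /eigval [q ^+ n.*2.+1]exprS -!mul2n !exprM !qpochS.
rewrite [(q ^+ 2) ^+ k.+1]exprS.
move: d1 d2 d3 d4 e1 e2 e3 e4 q20 qk0 qn0.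
set Q := (q ^+ 2) ^+ k; set N := (q ^+ 2) ^+ n.
move=> d1 d2 d3 d4 e1 e2 e3 e4 q20 qk0 qn0.
by field; rewrite exprMn ?q0 ?q20 ?d1 ?d2 ?d3 ?d4 ?e1 ?e2 ?e3 ?e4 ?qk0 ?qn0.
Qed.

End Coefficients.

Section Identity.
Variables (R : numFieldType) (q s a : R) (n : nat).
Hypotheses (q_gt0 : 0 < q) (q_lt1 : q < 1) (s_gt0 : 0 < s).
Hypotheses (qa_reg : forall j, qpoch (q * a) q j != 0)
  (qa_reg' : forall j, qpoch (- (q * a)) q j != 0)
  (qa2_reg : forall k, qpoch (q ^+ 2 * a ^+ 2) (q ^+ 2) k != 0)
  (s_reg : forall i, (i < n.*2)%N -> 1 - s ^+ 2 * q ^+ i != 0).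

Let q0 : q != 0. Proof. by rewrite gt_eqF. Qed.

Lemma phi_lowcoef_neq0 j : (0 < j <= n.*2)%N -> phi_lowcoef q s a j != 0.
Proof.
case: j => // j /= lt_jD.
have := qa_reg j.+1; rewrite qpochS mulf_eq0 negb_or => /andP[_ qa_fac].
have := qa_reg' j.+1; rewrite qpochS mulf_eq0 negb_or mulNr opprK => /andP[_ qa_fac'].
have s_fac := s_reg lt_jD.
rewrite /phi_lowcoef !mulf_neq0 ?oppr_eq0 ?invr_eq0 ?expf_neq0 //.
- by rewrite subr_eq0 eq_sym lt_eqF // exprn_ilt1 ?ltW.
- by rewrite exprS mulrCA mulrA.
- by rewrite exprS mulrCA mulrA.
- by rewrite [q ^+ j.+1]exprSr mulrA mulfK.
Qed.

Lemma qdiffop_phi_series x : 0 < x ->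
  qdiffop q s a (phi_series q s a n.*2) x = eigval q a n.*2 * phi_series q s a n.*2 x.
Proof.
move=> x_gt0; apply: (@qdiffop_tridiag_eigen _ q s a _ _ _ (phi_lowcoef q s a)).
- exact: phi_lowcoef0.
- by move=> j _; apply: qdiffop_phi_gt0.
move=> j lt_jD; apply: phi_coef_rec; rewrite ?qpoch_self_neq0 //.
by apply: qpoch_neq0 => i lt_ij; rewrite s_reg // (leq_ltn_trans _ lt_jD).
Qed.

Lemma qdiffop_psi_series x : 0 < x ->
  qdiffop q s a (psi_series q s a n) x = eigval q a n.*2 * psi_series q s a n x.
Proof.
move=> x_gt0.
apply: (@qdiffop_tridiag_eigen _ q s a n _ (fun k => eigval q a k.*2) (psi_lowcoef q s a)).
- exact: psi_lowcoef0.
- by move=> k _; apply: qdiffop_psi_gt0.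
move=> k lt_kn; apply: psi_coef_rec; rewrite ?qpoch_self_neq0 ?exprn_gt0 ?exprn_ilt1 ?ltW //.
- apply: qpoch_neq0 => i lt_ik; rewrite -exprM s_reg //.
  by rewrite mul2n ltn_double (leq_trans lt_ik).
- apply: qpoch_neq0 => i lt_ik; rewrite -exprM -mulrA -exprS s_reg //.
  by rewrite mul2n ltn_Sdouble (leq_trans lt_ik).
Qed.

Lemma phi_series_eq_psi_series z : z != 0 -> phi_series q s a n.*2 z = psi_series q s a n z.
Proof.
move=> z0; apply/eqP; rewrite -subr_eq0; apply/eqP; move: z z0.
apply: (@qdiffop_span_eigen_eq0 _ q s q_gt0 q_lt1 s_gt0 a n.*2
  (fun x => phi_series q s a n.*2 x - psi_series q s a n x)).
- exact: phi_lowcoef_neq0.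
- have phi_span : in_span q s n.*2 (phi_series q s a n.*2) by exists (phi_coef q s a n.*2).
  have psi_span : in_span q s n.*2 (psi_series q s a n).
    by apply: span_sum => k le_kn; apply: span_widen (span_psi s q0 k); rewrite leq_double.
  by apply: (span_ext (span_add phi_span (span_scale (-1) psi_span))) => x _; rewrite mulN1r.
- rewrite /phi_series /psi_series sum_phi_basis_s // sum_psi_basis_s //.
  by rewrite /phi_coef /psi_coef !qpoch0 !expr0 !mulr1 invr1 subrr.
- by move=> x x_gt0; rewrite qdiffop_sub qdiffop_phi_series // qdiffop_psi_series // mulrBr.
Qed.

End Identity.

Theorem mainTheorem7 (R : numClosedFieldType) (q : R) (M n : nat) (a z : R) :
  0 < q -> q < 1 ->
  (2 <= M)%N ->
  (n <= M./2)%N ->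
  (forall j : nat, q * a != q ^- j) ->
  (forall j : nat, - (q * a) != q ^- j) ->
  (forall j : nat, q ^+ 2 * a ^+ 2 != q ^- j) ->
  z != 0 ->
  phi43 n.*2 (q ^- n.*2) (a ^+ 2 * q ^+ n.*2.+1)
        (z^-1 * sqrtC q ^- M) (- (z * sqrtC q ^- M))
        (q * a) (- (q * a)) (q ^- M) q q
  =
  phi43 n (q ^+ 2 ^- n) (a ^+ 2 * q ^+ n.*2.+1)
        (z ^- 2 * q ^- M) (z ^+ 2 * q ^- M)
        (q ^+ 2 * a ^+ 2) (q ^- M) (q ^- M.-1) (q ^+ 2) (q ^+ 2).
Proof.
move=> q_gt0 q_lt1 M_ge2 n_le_M qa_neq qa_neq' qa2_neq z0.
have q0 : q != 0 by rewrite gt_eqF.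
set s := sqrtC q ^- M.
have s_gt0 : 0 < s by rewrite invr_gt0 exprn_gt0 // sqrtC_gt0.
have qM_sqr : q ^- M = s ^+ 2 by rewrite exprVn -exprM mulnC exprM sqrtCK.
have qM1_sqr : q ^- M.-1 = s ^+ 2 * q.
  rewrite -qM_sqr -[in q ^- M](prednK (ltnW M_ge2)) exprS invfM mulrAC.
  by rewrite mulVf ?mul1r.
rewrite qM1_sqr qM_sqr phi43_phi_series phi43_psi_series.
apply: phi_series_eq_psi_series => // [j|j|k|i lt_in].
- by apply: qpoch_neq0 => i _; apply: qfactor_neq0.
- by apply: qpoch_neq0 => i _; apply: qfactor_neq0.
- by apply: qpoch_neq0 => i _; rewrite -exprM qfactor_neq0.
have q_neq1 : q != 1 by rewrite lt_eqF.
rewrite -qM_sqr qfactor_neq0 // (inj_eq invr_inj) (inj_eq (ieexprIn q_gt0 q_neq1)).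
by rewrite gtn_eqF // (leq_trans lt_in) // -geq_half_double.
Qed.
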